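(* Let $w,w'\in[0,1]$ with $w+w'=1$. If $\textbf{F}$ is a strongly convex and $gH$-differentiable IVF on a nonempty convex subset $\mathcal{X}$ of $\mathbb{R}^n$ with $gH$-Lipschitz gradient, then there exist $\sigma>0$ and $L>0$ such that \[(\mathcal{W}(\nabla\textbf{F}(x))-\mathcal{W}(\nabla\textbf{F}(y)))^T(x-y)\ge\frac{\sigma}{L^2}\lVert\mathcal{W}(\nabla\textbf{F}(x))-\mathcal{W}(\nabla\textbf{F}(y))\rVert^2\quad\text{for all }x,y\in\mathcal{X}.\]
   Context: $I(\mathbb{R})$: closed bounded intervals $\textbf{A}=[\underline{a},\overline{a}]$ with Moore arithmetic ($\oplus$ endpointwise; $\lambda\odot\textbf{A}=[\lambda\underline{a},\lambda\overline{a}]$ if $\lambda\ge0$, $[\lambda\overline{a},\lambda\underline{a}]$ if $\lambda<0$); $\textbf{A}\ominus_{gH}\textbf{B}=[\min\{\underline{a}-\underline{b},\overline{a}-\overline{b}\},\max\{\underline{a}-\underline{b},\overline{a}-\overline{b}\}]$ (componentwise on $I(\mathbb{R})^n$). $\textbf{A}\preceq\textbf{B}$ iff $\underline{a}\le\underline{b}$, $\overline{a}\le\overline{b}$. Norms: $\lVert\textbf{A}\rVert_{I(\mathbb{R})}=\max\{|\underline{a}|,|\overline{a}|\}$, $\lVert(\textbf{A}_i)\rVert_{I(\mathbb{R})^n}=\sum_i\lVert\textbf{A}_i\rVert_{I(\mathbb{R})}$, $\lVert\cdot\rVert$ Euclidean. $D_i\textbf{F}(x)=\lim_{h\to0}\frac1h\odot(\textbf{F}(x+he_i)\ominus_{gH}\textbf{F}(x))$,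 $\nabla\textbf{F}(x)=(D_1\textbf{F}(x),\dots,D_n\textbf{F}(x))^T$. Linear IVF: $\textbf{L}(x)=\bigoplus_i x_i\odot\textbf{L}(e_i)$. $\textbf{F}$ is $gH$-differentiable at $\bar{x}$ if there exist a linear IVF $\textbf{L}_{\bar{x}}$, an IVF $\textbf{E}(\textbf{F}(\bar{x});d)$ and $\delta>0$ with $(\textbf{F}(\bar{x}+d)\ominus_{gH}\textbf{F}(\bar{x}))\ominus_{gH}\textbf{L}_{\bar{x}}(d)=\lVert d\rVert\odot\textbf{E}(\textbf{F}(\bar{x});d)$ for $\lVert d\rVert<\delta$ and $\textbf{E}\to\textbf{0}$ as $\lVert d\rVert\to0$. Strongly convex: there exist a convex IVF $\textbf{G}$ (i.e. $\textbf{G}(\lambda x_1+(1-\lambda)x_2)\preceq\lambda\odot\textbf{G}(x_1)\oplus(1-\lambda)\odot\textbf{G}(x_2)$) and $\sigma>0$ with $\textbf{F}(x)=\textbf{G}(x)\oplus\frac12\lVert x\rVert^2\odot[\sigma,\sigma]$. $gH$-Lipschitz gradient: $\lVert\nabla\textbf{F}(x)\ominus_{gH}\nabla\textbf{F}(y)\rVert_{I(\mathbb{R})^n}\le M\lVert x-y\rVert$ for some $M>0$ and all $x,y$. $\mathcal{W}(\textbf{A}_1,\dots,\textbf{A}_n)=(w\underline{a}_1+w'\overline{a}_1,\dots,w\underline{a}_n+w'\overline{a}_n)^T$. *)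

From HB Require Import structures.
From mathcomp Require Import all_boot all_order all_algebra.
From mathcomp Require Import reals.
Set Implicit Arguments. Unset Strict Implicit. Unset Printing Implicit Defensive.
Import Order.TTheory GRing.Theory Num.Theory.
Local Open Scope ring_scope.

Section Intervals.
Variable R : realType.

Record itv := Itv { ilo : R; ihi : R; ilohi : ilo <= ihi }.

Lemma iadd_ok (A B : itv) : ilo A + ilo B <= ihi A + ihi B.
Proof. by apply: lerD; apply: ilohi. Qed.
Definition iadd (A B : itv) : itv := Itv (iadd_ok A B).

Lemma izero_ok : (0 : R) <= 0. Proof. by []. Qed.
Definition izero : itv := Itv izero_ok.

Lemma iscale_pos_ok (l : R) (A : itv) : 0 <= l -> l * ilo A <= l * ihi A.
Proof. by move=> hl; apply: ler_wpM2l => //; apply: ilohi. Qed.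
Lemma iscale_neg_ok (l : R) (A : itv) : ~~ (0 <= l) -> l * ihi A <= l * ilo A.
Proof.
move=> hl; apply: ler_wnM2l; last exact: ilohi.
by rewrite -ltNge in hl; apply: ltW.
Qed.
Definition iscale (l : R) (A : itv) : itv :=
  match boolP (0 <= l) with
  | AltTrue h => Itv (iscale_pos_ok A h)
  | AltFalse h => Itv (iscale_neg_ok A h)
  end.

Lemma igH_ok (A B : itv) :
  Num.min (ilo A - ilo B) (ihi A - ihi B) <= Num.max (ilo A - ilo B) (ihi A - ihi B).
Proof. by rewrite ge_min !le_max lexx. Qed.
Definition igH (A B : itv) : itv := Itv (igH_ok A B).

Definition ile (A B : itv) : Prop := ilo A <= ilo B /\ ihi A <= ihi B.

Definition inorm (A : itv) : R := Num.max `|ilo A| `|ihi A|.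

Lemma ipoint_ok (s : R) : s <= s. Proof. exact: lexx. Qed.
Definition ipoint (s : R) : itv := Itv (ipoint_ok s).

Variable n : nat.

Definition igHn (A B : 'I_n -> itv) : 'I_n -> itv := fun i => igH (A i) (B i).
Definition inormn (A : 'I_n -> itv) : R := \sum_(i < n) inorm (A i).

Definition dotv (x y : 'rV[R]_n) : R := \sum_(i < n) x 0 i * y 0 i.
Definition enorm (x : 'rV[R]_n) : R := Num.sqrt (\sum_(i < n) x 0 i ^+ 2).

Definition evec (i : 'I_n) : 'rV[R]_n := delta_mx 0 i.

Definition linIVF (c : 'I_n -> itv) (x : 'rV[R]_n) : itv :=
  \big[iadd/izero]_(i < n) iscale (x 0 i) (c i).

Definition is_partial (F : 'rV[R]_n -> itv) (x : 'rV[R]_n) (i : 'I_n) (A : itv)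
  : Prop :=
  forall eps : R, 0 < eps -> exists2 delta : R, 0 < delta &
    forall h : R, h != 0 -> `|h| < delta ->
      inorm (igH (iscale h^-1 (igH (F (x + h *: evec i)) (F x))) A) < eps.

Definition is_grad (F : 'rV[R]_n -> itv) (x : 'rV[R]_n) (g : 'I_n -> itv) : Prop :=
  forall i, is_partial F x i (g i).

Definition gH_differentiable_at (F : 'rV[R]_n -> itv) (xb : 'rV[R]_n) : Prop :=
  exists (c : 'I_n -> itv) (E : 'rV[R]_n -> itv) (delta : R),
    [/\ 0 < delta,
        (forall d, enorm d < delta ->
           igH (igH (F (xb + d)) (F xb)) (linIVF c d) = iscale (enorm d) (E d))
      & (forall eps : R, 0 < eps -> exists2 eta : R, 0 < eta &
           forall d, 0 < enorm d < eta -> inorm (E d) < eps)].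

Definition convex_set (X : 'rV[R]_n -> Prop) : Prop :=
  forall x1 x2 (l : R), X x1 -> X x2 -> 0 <= l <= 1 ->
    X (l *: x1 + (1 - l) *: x2).

Definition convex_IVF_on (X : 'rV[R]_n -> Prop) (G : 'rV[R]_n -> itv) : Prop :=
  forall x1 x2 (l : R), X x1 -> X x2 -> 0 <= l <= 1 ->
    ile (G (l *: x1 + (1 - l) *: x2)) (iadd (iscale l (G x1)) (iscale (1 - l) (G x2))).

Definition strongly_convex_on (X : 'rV[R]_n -> Prop) (F : 'rV[R]_n -> itv) : Prop :=
  exists (G : 'rV[R]_n -> itv) (sigma : R),
    [/\ convex_IVF_on X G, 0 < sigma &
        forall x, X x -> F x = iadd (G x) (iscale (2^-1 * enorm x ^+ 2) (ipoint sigma))].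

Definition gH_Lipschitz_grad_on (X : 'rV[R]_n -> Prop) (F : 'rV[R]_n -> itv) : Prop :=
  exists2 M : R, 0 < M &
    forall x y gx gy, X x -> X y -> is_grad F x gx -> is_grad F y gy ->
      inormn (igHn gx gy) <= M * enorm (x - y).

Definition Wmap (w w' : R) (A : 'I_n -> itv) : 'rV[R]_n :=
  \row_(i < n) (w * ilo (A i) + w' * ihi (A i)).

End Intervals.

From HB Require Import structures.
From mathcomp Require Import all_boot all_order all_algebra.
From mathcomp Require Import reals boolp classical_sets.
From mathcomp Require Import ring lra.
Import Order.TTheory GRing.Theory Num.Theory.
Local Open Scope ring_scope.
Set Implicit Arguments. Unset Strict Implicit. Unset Printing Implicit Defensive.

(* Along the segment z t = y + t (x - y) the interval function t |-> F (z t) has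
   strongly convex endpoints (modulus sigma |v|^2, v = x - y) and gH-derivative
   [P t, Q t], the linear IVF of the gradient applied to v.  Comparing one-sided
   difference quotients with chords shows that P and Q increase at rate
   sigma |v|^2.  Moreover Phi t = W(grad F (z t))^T v is w P + w' Q or w' P + w Q,
   because the products v_i * width (D_i F) all have the same sign: the absolute
   increments of width F are, to first order, the weighted l1-norm
   sum_i |d_i| width (D_i F), and for weights of opposite signs three increments
   x, y, x - y would be forced away from the degenerate triangle that |x|, |y|,
   |x - y| always form (a Baire-type argument provides a common radius at two
   close points of the segment).  As Phi, P and Q are Lipschitz, Phi increases
   by sigma |v|^2 over [0, 1], and the Lipschitz bound
   |W(grad F x) - W(grad F y)| <= L |v| turns this into the inequality. *)

Section IntervalArithmetic.
Variable R : realType.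
Implicit Types (A B : itv R) (l : R).

Definition iwidth A : R := ihi A - ilo A.

Definition icomb (w w' : R) A : R := w * ilo A + w' * ihi A.

Lemma iwidth_ge0 A : 0 <= iwidth A.
Proof. by rewrite subr_ge0 ilohi. Qed.

Lemma ilo_iscale l A : ilo (iscale l A) = Num.min (l * ilo A) (l * ihi A).
Proof.
rewrite /iscale; destruct (boolP (0 <= l)) as [hl|hl] => /=.
  by rewrite min_l // ler_wpM2l // ilohi.
by rewrite min_r // ler_wnM2l ?ilohi // ltW // ltNge.
Qed.

Lemma ihi_iscale l A : ihi (iscale l A) = Num.max (l * ilo A) (l * ihi A).
Proof.
rewrite /iscale; destruct (boolP (0 <= l)) as [hl|hl] => /=.
  by rewrite max_r // ler_wpM2l // ilohi.
by rewrite max_l // ler_wnM2l ?ilohi // ltW // ltNge.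
Qed.

Lemma ilo_iscale_ge0 l A : 0 <= l -> ilo (iscale l A) = l * ilo A.
Proof. by move=> hl; rewrite ilo_iscale min_l // ler_wpM2l // ilohi. Qed.

Lemma ihi_iscale_ge0 l A : 0 <= l -> ihi (iscale l A) = l * ihi A.
Proof. by move=> hl; rewrite ihi_iscale max_r // ler_wpM2l // ilohi. Qed.

Lemma ilo_iscale_le0 l A : l <= 0 -> ilo (iscale l A) = l * ihi A.
Proof. by move=> hl; rewrite ilo_iscale min_r // ler_wnM2l // ilohi. Qed.

Lemma ihi_iscale_le0 l A : l <= 0 -> ihi (iscale l A) = l * ilo A.
Proof. by move=> hl; rewrite ihi_iscale max_l // ler_wnM2l // ilohi. Qed.

Lemma inorm_ge0 A : 0 <= inorm A.
Proof. by rewrite le_max normr_ge0. Qed.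

Lemma inorm_iscale l A : inorm (iscale l A) = `|l| * inorm A.
Proof.
rewrite /inorm; have [hl|/ltW hl] := leP 0 l.
  by rewrite ilo_iscale_ge0 ?ihi_iscale_ge0 // !normrM maxr_pMr.
by rewrite ilo_iscale_le0 ?ihi_iscale_le0 // !normrM maxr_pMr // maxC.
Qed.

Lemma inorm_igH A B : inorm (igH A B) = Num.max `|ilo A - ilo B| `|ihi A - ihi B|.
Proof. by rewrite /inorm /=; case: (leP (ilo A - ilo B) (ihi A - ihi B)) => // _; rewrite maxC. Qed.

Lemma ler_dist_ilo_igH A B : `|ilo A - ilo B| <= inorm (igH A B).
Proof. by rewrite inorm_igH le_max lexx. Qed.

Lemma ler_dist_ihi_igH A B : `|ihi A - ihi B| <= inorm (igH A B).
Proof. by rewrite inorm_igH le_max lexx orbT. Qed.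

Lemma ler_dist_icomb w w' A B : 0 <= w -> 0 <= w' -> w + w' = 1 ->
  `|icomb w w' A - icomb w w' B| <= inorm (igH A B).
Proof.
move=> hw hw' hww.
have -> : icomb w w' A - icomb w w' B = w * (ilo A - ilo B) + w' * (ihi A - ihi B).
  by rewrite /icomb; ring.
apply: (le_trans (ler_normD _ _)); rewrite !normrM (ger0_norm hw) (ger0_norm hw').
have := ler_wpM2l hw (ler_dist_ilo_igH A B).
have := ler_wpM2l hw' (ler_dist_ihi_igH A B).
move=> h1 h2; rewrite -[X in _ <= X]mul1r -hww mulrDl; lra.
Qed.

Lemma iwidth_igH A B : iwidth (igH A B) = `|iwidth A - iwidth B|.
Proof.
rewrite /iwidth /=; case: (leP (ilo A - ilo B) (ihi A - ihi B)) => h.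
  by rewrite ger0_norm; [ring | lra].
by rewrite ler0_norm; [ring | lra].
Qed.

Lemma ler_dist_iwidth A B : `|iwidth A - iwidth B| <= 2 * inorm (igH A B).
Proof.
have -> : iwidth A - iwidth B = (ihi A - ihi B) - (ilo A - ilo B) by rewrite /iwidth; ring.
apply: (le_trans (ler_normB _ _)).
have := ler_dist_ilo_igH A B; have := ler_dist_ihi_igH A B; lra.
Qed.

Lemma ilo_igHC A B : ilo (igH A B) = - ihi (igH B A).
Proof. by rewrite /= oppr_max !opprB. Qed.

Lemma itv_ext A B : ilo A = ilo B -> ihi A = ihi B -> A = B.
Proof.
case: A => a1 a2 ha; case: B => b1 b2 hb /= e1 e2; subst.
by congr Itv; apply: bool_irrelevance.
Qed.

Lemma iscaleA l l' A : iscale l (iscale l' A) = iscale (l * l') A.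
Proof.
have [hl|/ltW hl] := leP 0 l; have [hl'|/ltW hl'] := leP 0 l'; apply: itv_ext.
- by rewrite !ilo_iscale_ge0 ?mulr_ge0 // mulrA.
- by rewrite !ihi_iscale_ge0 ?mulr_ge0 // mulrA.
- by rewrite (ilo_iscale_ge0 _ hl) (ilo_iscale_le0 _ hl')
    (ilo_iscale_le0 _ (mulr_ge0_le0 hl hl')) mulrA.
- by rewrite (ihi_iscale_ge0 _ hl) (ihi_iscale_le0 _ hl')
    (ihi_iscale_le0 _ (mulr_ge0_le0 hl hl')) mulrA.
- by rewrite (ilo_iscale_le0 _ hl) (ihi_iscale_ge0 _ hl')
    (ilo_iscale_le0 _ (mulr_le0_ge0 hl hl')) mulrA.
- by rewrite (ihi_iscale_le0 _ hl) (ilo_iscale_ge0 _ hl')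
    (ihi_iscale_le0 _ (mulr_le0_ge0 hl hl')) mulrA.
- by rewrite (ilo_iscale_le0 _ hl) (ihi_iscale_le0 _ hl')
    (ilo_iscale_ge0 _ (mulr_le0 hl hl')) mulrA.
- by rewrite (ihi_iscale_le0 _ hl) (ilo_iscale_le0 _ hl')
    (ihi_iscale_ge0 _ (mulr_le0 hl hl')) mulrA.
Qed.

Lemma iscale1 A : iscale 1 A = A.
Proof. by apply: itv_ext; rewrite ?ilo_iscale_ge0 ?ihi_iscale_ge0 // mul1r. Qed.

Lemma iscale_igH l A B : iscale l (igH A B) = igH (iscale l A) (iscale l B).
Proof.
have [hl|/ltW hl] := leP 0 l; apply: itv_ext => /=.
- by rewrite !ilo_iscale_ge0 ?ihi_iscale_ge0 // minr_pMr // !mulrBr.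
- by rewrite !ihi_iscale_ge0 ?ilo_iscale_ge0 // maxr_pMr // !mulrBr.
- by rewrite !ilo_iscale_le0 ?ihi_iscale_le0 // maxr_nMr // !mulrBr minC.
- by rewrite !ihi_iscale_le0 ?ilo_iscale_le0 // minr_nMr // !mulrBr maxC.
Qed.

End IntervalArithmetic.

Section RealFacts.
Variable R : realType.

Lemma ler_dist_min (a b a' b' : R) :
  `|Num.min a b - Num.min a' b'| <= Num.max `|a - a'| `|b - b'|.
Proof.
rewrite le_max; case: (leP a b) => h1; case: (leP a' b') => h2.
- by rewrite lexx.
- apply/orP; case: (leP 0 (a - b')) => h3.
    by right; rewrite !ger0_norm; lra.
  by left; rewrite !ler0_norm; lra.
- apply/orP; case: (leP 0 (b - a')) => h3.
    by left; rewrite !ger0_norm; lra.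
  by right; rewrite !ler0_norm; lra.
- by rewrite lexx orbT.
Qed.

Lemma ler_dist_max (a b a' b' : R) :
  `|Num.max a b - Num.max a' b'| <= Num.max `|a - a'| `|b - b'|.
Proof.
have eN (x y : R) : `|- x - - y| = `|x - y| by rewrite -opprD normrN.
rewrite -[Num.max a b]opprK -[Num.max a' b']opprK !oppr_max eN -(eN a) -(eN b).
exact: ler_dist_min.
Qed.

Lemma ler_term_sum n (f : 'I_n -> R) i : (forall j, 0 <= f j) -> f i <= \sum_j f j.
Proof. by move=> hf; rewrite (bigD1 i) //= lerDl sumr_ge0. Qed.

Lemma ler_sum_sqr n (f : 'I_n -> R) : (forall i, 0 <= f i) ->
  \sum_i f i ^+ 2 <= (\sum_i f i) ^+ 2.
Proof.
move=> hf; rewrite expr2 mulr_suml; apply: ler_sum => i _.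
by rewrite expr2 ler_wpM2l // ler_term_sum.
Qed.

Lemma cocoercive_of_strongly_monotone (sg M a r b : R) : 0 < sg -> 0 < M ->
  0 <= a -> a <= M * r -> sg * r ^+ 2 <= b -> sg / M ^+ 2 * a ^+ 2 <= b.
Proof.
move=> hsg hM ha har hb; apply: le_trans hb.
have hMr : a ^+ 2 <= M ^+ 2 * r ^+ 2 by rewrite -exprMn ler_sqr ?nnegrE ?(le_trans ha).
apply: le_trans (ler_wpM2l (divr_ge0 (ltW hsg) (sqr_ge0 M)) hMr) _.
by rewrite le_eqVlt; apply/orP; left; apply/eqP; field; rewrite gt_eqF.
Qed.

End RealFacts.

Section EuclideanNorm.
Variables (R : realType) (n : nat).
Implicit Types (v : 'rV[R]_n).

Lemma enorm_ge0 v : 0 <= enorm v.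
Proof. exact: sqrtr_ge0. Qed.

Lemma enorm_sqr v : enorm v ^+ 2 = \sum_i v 0 i ^+ 2.
Proof. by rewrite sqr_sqrtr // sumr_ge0 // => i _; rewrite sqr_ge0. Qed.

Lemma enormZ (k : R) v : enorm (k *: v) = `|k| * enorm v.
Proof.
rewrite /enorm -sqrtr_sqr -sqrtrM ?sqr_ge0 // mulr_sumr.
by congr Num.sqrt; apply: eq_bigr => i _; rewrite mxE exprMn.
Qed.

Lemma enorm0 : enorm (0 : 'rV[R]_n) = 0.
Proof. by rewrite -(scale0r 0) enormZ normr0 mul0r. Qed.

Lemma enorm_eq0 v : enorm v = 0 -> v = 0.
Proof.
move/eqP; rewrite sqrtr_eq0 => hv; apply/matrixP => i j; rewrite ord1 mxE.
have hsum : \sum_k v 0 k ^+ 2 = 0.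
  by apply/eqP; rewrite eq_le hv sumr_ge0 // => k _; rewrite sqr_ge0.
by apply/eqP; rewrite -sqrf_eq0; apply/eqP; apply: (psumr_eq0P _ hsum) => // k _; rewrite sqr_ge0.
Qed.

Lemma ler_coord_enorm v i : `|v 0 i| <= enorm v.
Proof.
rewrite /enorm -sqrtr_sqr ler_sqrt ?sumr_ge0 // => [|k _]; last by rewrite sqr_ge0.
by rewrite ler_term_sum // => k; rewrite sqr_ge0.
Qed.

Lemma enorm_le_sum_abs v : enorm v <= \sum_i `|v 0 i|.
Proof.
rewrite -ler_sqr ?nnegrE ?enorm_ge0 ?sumr_ge0 // enorm_sqr.
under eq_bigr do rewrite -real_normK ?num_real //.
exact: ler_sum_sqr.
Qed.

Lemma enorm_evec (i : 'I_n) : enorm (evec R i) = 1.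
Proof.
rewrite /enorm (bigD1 i) //= big1 => [|j hj]; last by rewrite mxE (negbTE hj) andbF expr0n.
by rewrite mxE !eqxx expr1n addr0 sqrtr1.
Qed.

Definition wnorm (W : 'I_n -> R) v : R := \sum_i `|v 0 i| * W i.

End EuclideanNorm.

Section LinearIVF.
Variables (R : realType) (n : nat).
Implicit Types (c : 'I_n -> itv R) (d : 'rV[R]_n).

Lemma ilo_linIVF c d :
  ilo (linIVF c d) = \sum_i Num.min (d 0 i * ilo (c i)) (d 0 i * ihi (c i)).
Proof.
rewrite /linIVF (big_morph (@ilo R) (id1 := 0) (op1 := +%R)) //.
by apply: eq_bigr => i _; rewrite ilo_iscale.
Qed.

Lemma ihi_linIVF c d :
  ihi (linIVF c d) = \sum_i Num.max (d 0 i * ilo (c i)) (d 0 i * ihi (c i)).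
Proof.
rewrite /linIVF (big_morph (@ihi R) (id1 := 0) (op1 := +%R)) //.
by apply: eq_bigr => i _; rewrite ihi_iscale.
Qed.

Lemma iwidth_linIVF c d : iwidth (linIVF c d) = wnorm (fun i => iwidth (c i)) d.
Proof.
rewrite /iwidth ilo_linIVF ihi_linIVF -sumrB; apply: eq_bigr => i _ /=.
rewrite -[ihi _ - _]ger0_norm ?subr_ge0 ?ilohi // -normrM mulrBr.
case: (leP (d 0 i * ilo (c i)) (d 0 i * ihi (c i))) => h.
  by rewrite ger0_norm // subr_ge0.
by rewrite ltr0_norm ?opprB // subr_lt0.
Qed.

Lemma linIVFZ c (s : R) d : linIVF c (s *: d) = iscale s (linIVF c d).
Proof.
have [hs|/ltW hs] := leP 0 s; apply: itv_ext.
- rewrite ilo_iscale_ge0 // !ilo_linIVF mulr_sumr.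
  by apply: eq_bigr => i _; rewrite mxE -!mulrA minr_pMr.
- rewrite ihi_iscale_ge0 // !ihi_linIVF mulr_sumr.
  by apply: eq_bigr => i _; rewrite mxE -!mulrA maxr_pMr.
- rewrite ilo_iscale_le0 // ilo_linIVF ihi_linIVF mulr_sumr.
  by apply: eq_bigr => i _; rewrite mxE -!mulrA maxr_nMr.
- rewrite ihi_iscale_le0 // ilo_linIVF ihi_linIVF mulr_sumr.
  by apply: eq_bigr => i _; rewrite mxE -!mulrA minr_nMr.
Qed.

Lemma linIVF_evec c i : linIVF c (evec R i) = c i.
Proof.
have e0 j : j != i -> evec R i 0 j = 0 by move=> hj; rewrite mxE (negbTE hj) andbF.
have e1 : evec R i 0 i = 1 by rewrite mxE !eqxx.
apply: itv_ext; rewrite ?ilo_linIVF ?ihi_linIVF (bigD1 i) //= big1 => [|j /e0 ->];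
  rewrite ?e1 ?mul1r ?mul0r ?minxx ?maxxx ?addr0 //.
- by rewrite min_l ?ilohi.
- by rewrite max_r ?ilohi.
Qed.

Lemma ler_dist_ilo_linIVF c c' d :
  `|ilo (linIVF c d) - ilo (linIVF c' d)| <= enorm d * inormn (igHn c c').
Proof.
rewrite !ilo_linIVF -sumrB mulr_sumr; apply: (le_trans (ler_norm_sum _ _ _)).
apply: ler_sum => i _; apply: (le_trans (ler_dist_min _ _ _ _)).
rewrite -!mulrBr !normrM -maxr_pMr // -inorm_igH.
by rewrite ler_wpM2r ?inorm_ge0 ?ler_coord_enorm.
Qed.

Lemma ler_dist_ihi_linIVF c c' d :
  `|ihi (linIVF c d) - ihi (linIVF c' d)| <= enorm d * inormn (igHn c c').
Proof.
rewrite !ihi_linIVF -sumrB mulr_sumr; apply: (le_trans (ler_norm_sum _ _ _)).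
apply: ler_sum => i _; apply: (le_trans (ler_dist_max _ _ _ _)).
rewrite -!mulrBr !normrM -maxr_pMr // -inorm_igH.
by rewrite ler_wpM2r ?inorm_ge0 ?ler_coord_enorm.
Qed.

Lemma dotv_Wmap w w' c d :
  dotv (Wmap w w' c) d = \sum_i d 0 i * icomb w w' (c i).
Proof. by apply: eq_bigr => i _; rewrite mxE mulrC. Qed.

Lemma ler_dist_dotv_Wmap w w' c c' d : 0 <= w -> 0 <= w' -> w + w' = 1 ->
  `|dotv (Wmap w w' c) d - dotv (Wmap w w' c') d| <= enorm d * inormn (igHn c c').
Proof.
move=> hw hw' hww; rewrite !dotv_Wmap -sumrB mulr_sumr.
apply: (le_trans (ler_norm_sum _ _ _)); apply: ler_sum => i _.
rewrite -mulrBr normrM; apply: ler_pM; rewrite ?normr_ge0 ?ler_coord_enorm //.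
exact: ler_dist_icomb.
Qed.

Lemma enorm_Wmap_sub w w' c c' : 0 <= w -> 0 <= w' -> w + w' = 1 ->
  enorm (Wmap w w' c - Wmap w w' c') <= inormn (igHn c c').
Proof.
move=> hw hw' hww; apply: (le_trans (enorm_le_sum_abs _)); apply: ler_sum => i _.
by rewrite !mxE; exact: ler_dist_icomb.
Qed.

Lemma dotvBl (u u' d : 'rV[R]_n) : dotv (u - u') d = dotv u d - dotv u' d.
Proof. by rewrite /dotv -sumrB; apply: eq_bigr => i _; rewrite !mxE mulrBl. Qed.

Lemma dotv_Wmap_nonneg_widths w w' c d : (forall i, 0 <= d 0 i * iwidth (c i)) ->
  dotv (Wmap w w' c) d = w * ilo (linIVF c d) + w' * ihi (linIVF c d).
Proof.
move=> hd; rewrite dotv_Wmap ilo_linIVF ihi_linIVF !mulr_sumr -big_split /=.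
apply: eq_bigr => i _; have := hd i; rewrite /iwidth mulrBr subr_ge0 => hi.
by rewrite min_l // max_r // /icomb; ring.
Qed.

Lemma dotv_Wmap_nonpos_widths w w' c d : (forall i, d 0 i * iwidth (c i) <= 0) ->
  dotv (Wmap w w' c) d = w' * ilo (linIVF c d) + w * ihi (linIVF c d).
Proof.
move=> hd; rewrite dotv_Wmap ilo_linIVF ihi_linIVF !mulr_sumr -big_split /=.
apply: eq_bigr => i _; have := hd i; rewrite /iwidth mulrBr subr_le0 => hi.
by rewrite min_r // max_l // /icomb; ring.
Qed.

End LinearIVF.

Section GHDerivative.
Variables (R : realType) (n : nat) (F : 'rV[R]_n -> itv R).
Implicit Types (z d : 'rV[R]_n) (c : 'I_n -> itv R).

Definition gH_derivative_at z c : Prop :=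
  forall e : R, 0 < e -> exists2 eta : R, 0 < eta & forall d, enorm d < eta ->
    inorm (igH (igH (F (z + d)) (F z)) (linIVF c d)) <= e * enorm d.

Lemma gH_differentiable_derivative z :
  gH_differentiable_at F z -> exists c, gH_derivative_at z c.
Proof.
move=> [c [E [delta [hdelta hE hlim]]]]; exists c => e he.
have [eta heta hsmall] := hlim e he.
exists (Num.min delta eta); first by rewrite lt_min hdelta heta.
move=> d; rewrite lt_min => /andP [hd1 hd2].
have [/enorm_eq0 d0|dpos] := eqVneq (enorm d) 0.
  rewrite d0 enorm0 mulr0 addr0 -(scale0r 0) linIVFZ inorm_igH /=.
  by rewrite ilo_iscale_ge0 ?ihi_iscale_ge0 // !mul0r !subrr minxx maxxx subrr normr0 maxxx.
rewrite hE // inorm_iscale ger0_norm ?enorm_ge0 // mulrC ler_wpM2r ?enorm_ge0 //.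
by apply/ltW/hsmall; rewrite hd2 lt_neqAle eq_sym dpos enorm_ge0.
Qed.

Lemma gH_derivative_grad z c : gH_derivative_at z c -> is_grad F z c.
Proof.
move=> hc i eps heps; have [eta heta hsmall] := hc (eps / 2) (divr_gt0 heps (ltr0Sn _ 1)).
exists eta => // h hn hlt.
have := hsmall (h *: evec R i); rewrite enormZ enorm_evec mulr1 linIVFZ linIVF_evec.
move=> /(_ hlt) hb.
have -> : c i = iscale h^-1 (iscale h (c i)) by rewrite iscaleA mulVf ?iscale1.
rewrite -iscale_igH inorm_iscale normfV mulrC ltr_pdivrMr ?normr_gt0 //.
by apply: (le_lt_trans hb); rewrite ltr_pM2r ?normr_gt0 //; lra.
Qed.

Lemma gH_derivative_width z c : gH_derivative_at z c ->
  forall e : R, 0 < e -> exists2 eta : R, 0 < eta & forall d, enorm d < eta ->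
    `| `|iwidth (F (z + d)) - iwidth (F z)| - wnorm (fun i => iwidth (c i)) d|
      <= e * enorm d.
Proof.
move=> hc e he; have [eta heta hsmall] := hc (e / 2) (divr_gt0 he (ltr0Sn _ 1)).
exists eta => // d hd; rewrite -iwidth_igH -iwidth_linIVF.
apply: (le_trans (ler_dist_iwidth _ _)).
by rewrite -ler_pdivlMl // mulrA [_^-1 * e]mulrC hsmall.
Qed.

End GHDerivative.

Section StrongConvexity.
Variables (R : realType) (n : nat).
Implicit Types (X : 'rV[R]_n -> Prop) (z : 'rV[R]_n).

Definition strongly_convex_fun_on X (f : 'rV[R]_n -> R) (k : R) : Prop :=
  forall z1 z2 (l : R), X z1 -> X z2 -> 0 <= l <= 1 ->
    f (l *: z1 + (1 - l) *: z2)
      <= l * f z1 + (1 - l) * f z2 - k / 2 * (l * (1 - l)) * enorm (z1 - z2) ^+ 2.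

Lemma enorm_convex_comb (l : R) z1 z2 : enorm (l *: z1 + (1 - l) *: z2) ^+ 2 =
  l * enorm z1 ^+ 2 + (1 - l) * enorm z2 ^+ 2 - l * (1 - l) * enorm (z1 - z2) ^+ 2.
Proof.
rewrite !enorm_sqr !mulr_sumr -big_split -sumrB /=; apply: eq_bigr => i _.
by rewrite !mxE; ring.
Qed.

Lemma strongly_convex_endpoints X (F : 'rV[R]_n -> itv R) :
  convex_set X -> strongly_convex_on X F ->
  exists2 k : R, 0 < k & strongly_convex_fun_on X (fun z => ilo (F z)) k
                         /\ strongly_convex_fun_on X (fun z => ihi (F z)) k.
Proof.
move=> hX [G [k [hG hk hF]]]; exists k => //.
have hsq z : 0 <= 2^-1 * enorm z ^+ 2 by apply: mulr_ge0; rewrite ?invr_ge0 ?sqr_ge0.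
split=> z1 z2 l h1 h2 hl; have hc := hX z1 z2 l h1 h2 hl.
all: have /andP [hl0] := hl; rewrite -subr_ge0 => hl1.
all: have [hlo hhi] := hG z1 z2 l h1 h2 hl; move: hlo hhi.
all: rewrite !hF //= ?(ilo_iscale_ge0 _ hl0) ?(ilo_iscale_ge0 _ hl1).
all: rewrite ?(ihi_iscale_ge0 _ hl0) ?(ihi_iscale_ge0 _ hl1).
all: rewrite ?(ilo_iscale_ge0 _ (hsq _)) ?(ihi_iscale_ge0 _ (hsq _)).
all: by move=> hlo hhi; rewrite enorm_convex_comb /=; lra.
Qed.

End StrongConvexity.

Section UnitInterval.
Variable R : realType.
Implicit Types (f g A B : R -> R) (k K : R).

Definition lipschitz01 K f : Prop := forall t t', 0 <= t <= 1 -> 0 <= t' <= 1 ->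
  `|f t - f t'| <= K * `|t - t'|.

Definition increasing01 k f : Prop := forall t1 t2, 0 <= t1 -> t1 <= t2 -> t2 <= 1 ->
  f t1 + k * (t2 - t1) <= f t2.

Lemma lipschitz01_ge0 K f : lipschitz01 K f -> 0 <= K.
Proof.
move=> /(_ 1 0); rewrite subr0 normr1 mulr1 lexx ler01 => /(_ isT).
by rewrite lexx => /(_ isT); apply: le_trans.
Qed.

Lemma lipschitz01B K K' f g : lipschitz01 K f -> lipschitz01 K' g ->
  lipschitz01 (K + K') (fun t => f t - g t).
Proof.
move=> hf hg t t' ht ht'; have := hf t t' ht ht'; have := hg t t' ht ht'.
have -> : f t - g t - (f t' - g t') = (f t - f t') - (g t - g t') by ring.
have := ler_normB (f t - f t') (g t - g t'); lra.
Qed.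

Lemma lipschitz01_eq0 K g tau : lipschitz01 K g -> 0 <= tau <= 1 ->
  (forall eta : R, 0 < eta -> exists t : R, [/\ 0 <= t <= 1, `|t - tau| <= eta & g t = 0]) ->
  g tau = 0.
Proof.
move=> hg htau hnear; apply/normr0_eq0/eqP; rewrite eq_le normr_ge0 andbT.
apply/ler_addgt0Pr => e he; rewrite add0r.
have hK := lipschitz01_ge0 hg; have hK1 : 0 < K + 1 by lra.
have [t [ht hdist hgt]] := hnear (e / (K + 1)) (divr_gt0 he hK1).
rewrite -[g tau]subr0 -hgt; apply: (le_trans (hg _ _ htau ht)); rewrite distrC.
apply: (le_trans (ler_wpM2l hK hdist)).
by rewrite mulrA ler_pdivrMr //; nra.
Qed.

Lemma increasing01_switch k K f A B :
  (forall t, 0 <= t <= 1 -> f t = A t \/ f t = B t) ->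
  increasing01 k A -> increasing01 k B ->
  lipschitz01 K f -> lipschitz01 K A -> lipschitz01 K B ->
  f 0 + k <= f 1.
Proof.
have h01 : 0 <= (0 : R) <= 1 by rewrite lexx ler01.
wlog hB0 : A B / f 0 = B 0.
  move=> hwlog hAB hA hB hf hLA hLB; have [hA0|hB0] := hAB 0 h01.
    by apply: (hwlog B A) => // t /hAB []; [right|left].
  exact: (hwlog A B).
move=> hAB hA hB hf hLA hLB.
(* [tau] is the last time [f] follows [B]; by continuity [f] also equals [A] there. *)
pose S : set R := fun t => 0 <= t <= 1 /\ f t = B t.
have hS : has_sup S by split; [exists 0 | exists 1 => t [/andP []]].
pose tau := sup S.
have htau0 : 0 <= tau by apply: sup_upper_bound.
have htau : 0 <= tau <= 1 by rewrite htau0 ge_sup //; [exists 0 | move=> t [/andP []]].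
have hLfA := lipschitz01B hf hLA; have hLfB := lipschitz01B hf hLB.
have hBtau : f tau - B tau = 0.
  apply: (lipschitz01_eq0 hLfB htau) => eta heta.
  have [t [ht hBt] htl] := sup_adherent heta hS.
  exists t; split; rewrite ?hBt ?subrr //.
  by rewrite ler0_norm ?subr_le0 ?sup_upper_bound //; move: htl; rewrite -/tau; lra.
have [htau1|htau1] := leP 1 tau.
  have e1 : tau = 1 by apply/eqP; rewrite eq_le htau1 andbT; case/andP: htau.
  move: hBtau; rewrite e1; have := hB 0 1 (lexx 0) ler01 (lexx 1); lra.
have hArest t : tau < t -> t <= 1 -> f t = A t.
  move=> ht ht1; have ht01 : 0 <= t <= 1 by rewrite ht1 andbT; lra.
  have [//|hBt] := hAB t ht01.
  by have := sup_upper_bound hS (conj ht01 hBt); rewrite -/tau; lra.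
have hAtau : f tau - A tau = 0.
  apply: (lipschitz01_eq0 hLfA htau) => eta heta.
  pose t := Num.min 1 (tau + eta).
  have htt : tau < t by rewrite lt_min htau1 ltrDl.
  have ht1 : t <= 1 by rewrite ge_min lexx.
  have hte : t <= tau + eta by rewrite ge_min lexx orbT.
  exists t; rewrite hArest // subrr; split => //; first by rewrite ht1 andbT; lra.
  by rewrite ger0_norm; lra.
have := hA tau 1 htau0 (ltW htau1) (lexx 1); have := hB 0 tau (lexx 0) htau0 (ltW htau1).
rewrite (hArest 1 htau1 (lexx 1)); lra.
Qed.

Lemma lipschitz01_comb K (w w' : R) f g : 0 <= w -> 0 <= w' -> w + w' = 1 ->
  lipschitz01 K f -> lipschitz01 K g -> lipschitz01 K (fun t => w * f t + w' * g t).
Proof.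
move=> hw hw' hww hf hg t t' ht ht'; have := hf t t' ht ht'; have := hg t t' ht ht'.
have -> : w * f t + w' * g t - (w * f t' + w' * g t') = w * (f t - f t') + w' * (g t - g t').
  by ring.
move=> h1 h2; apply: (le_trans (ler_normD _ _)).
rewrite !normrM (ger0_norm hw) (ger0_norm hw') -[K * _]mul1r -hww mulrDl.
by apply: lerD; apply: ler_wpM2l.
Qed.

Lemma increasing01_comb k (w w' : R) f g : 0 <= w -> 0 <= w' -> w + w' = 1 ->
  increasing01 k f -> increasing01 k g -> increasing01 k (fun t => w * f t + w' * g t).
Proof.
move=> hw hw' hww hf hg t1 t2 h1 h12 h2.
have := ler_wpM2l hw (hf t1 t2 h1 h12 h2); have := ler_wpM2l hw' (hg t1 t2 h1 h12 h2).
by rewrite -[k in X in _ -> _ -> X]mul1r -hww; lra.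
Qed.

End UnitInterval.

Section NestedIntervals.
Variable R : realType.

Lemma nested_intervals (a b : nat -> R) :
  (forall m, a m <= a m.+1) -> (forall m, b m.+1 <= b m) -> (forall m, a m <= b m) ->
  exists x, forall m, a m <= x <= b m.
Proof.
move=> ha hb hab.
have amono := homo_leq lexx le_trans ha.
have bmono := homo_leq (r := fun x y => y <= x) lexx (fun _ _ _ h1 h2 => le_trans h2 h1) hb.
have hle k m : a k <= b m.
  apply: (le_trans (amono _ _ (leq_maxl k m))); apply: (le_trans (hab _)).
  exact: bmono (leq_maxr k m).
pose E : set R := fun x => exists k, x = a k.
have hE : has_sup E by split; [exists (a 0), 0 | exists (b 0) => _ [k ->]].
exists (sup E) => m; apply/andP; split; first by apply: sup_upper_bound => //; exists m.
by apply: ge_sup; [exists (a 0), 0 | move=> _ [k ->]].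
Qed.

Lemma separated_gap (P : R -> Prop) (r a b : R) : 0 < r -> a < b ->
  (forall t t', P t -> P t' -> a <= t -> t < t' -> t' <= b -> t + r <= t') ->
  exists a' b', [/\ a <= a', a' < b', b' <= b & forall t, a' <= t <= b' -> ~ P t].
Proof.
move=> hr hab hsep; pose L := Num.min (b - a) r / 4.
have hL : 0 < L by rewrite divr_gt0 // lt_min subr_gt0 hab hr.
have hLba : 4 * L <= b - a by rewrite mulrC divfK ?ge_min ?lexx // pnatr_eq0.
have hLr : 4 * L <= r by rewrite mulrC divfK ?ge_min ?lexx ?orbT // pnatr_eq0.
have [[t0 [hPt0 /andP [h1 h2]]] | hno] := pselect (exists t, P t /\ a <= t <= a + L).
  exists (a + 2 * L), (a + 3 * L); split; try lra.
  by move=> t /andP [h3 h4] hPt; have := hsep t0 t hPt0 hPt h1; lra.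
exists a, (a + L); split; try lra.
by move=> t ht hPt; apply: hno; exists t.
Qed.

Lemma countable_cover_close_pair (T : nat -> R -> Prop) (r : nat -> R) (al be : R) :
  al < be -> (forall m, 0 < r m) -> (forall t, al <= t <= be -> exists m, T m t) ->
  exists m t t', [/\ T m t, T m t', al <= t, t < t' & t' <= be] /\ t' - t < r m.
Proof.
(* Otherwise every [T m] is [r m]-separated, and nested gaps avoiding [T 0],
   [T 1], ... meet in a point of [[al, be]] covered by no [T m]. *)
move=> hab hr hcov; apply: contrapT => hfar.
have hsep m t t' : T m t -> T m t' -> al <= t -> t < t' -> t' <= be -> t + r m <= t'.
  move=> ht ht' h1 h2 h3; case: (leP (t + r m) t') => // hlt.
  by exfalso; apply: hfar; exists m, t, t'; split => //; lra.
have step m (ab : R * R) : exists ab' : R * R, al <= ab.1 -> ab.1 < ab.2 -> ab.2 <= be ->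
    [/\ ab.1 <= ab'.1, ab'.1 < ab'.2, ab'.2 <= ab.2 &
        forall t, ab'.1 <= t <= ab'.2 -> ~ T m t].
  case: (pselect (al <= ab.1 /\ ab.1 < ab.2 /\ ab.2 <= be)) => [[h1 [h2 h3]] | hno].
    have [a' [b' [*]]] := separated_gap (P := T m) (hr m) h2
      (fun t t' p p' h4 h5 h6 => hsep m t t' p p' (le_trans h1 h4) h5 (le_trans h6 h3)).
    by exists (a', b').
  by exists ab => h1 h2 h3; exfalso; apply: hno.
have [g hg] := choice (fun mab : nat * (R * R) => step mab.1 mab.2).
pose I := fix I m := if m is m'.+1 then g (m', I m') else (al, be).
have hI m : [/\ al <= (I m).1, (I m).1 < (I m).2 & (I m).2 <= be].
  elim: m => [|m [h1 h2 h3]] /=; first by rewrite lexx.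
  by have [h4 h5 h6 _] := hg (m, I m) h1 h2 h3; split => //; lra.
have hstep m := let: And3 h1 h2 h3 := hI m in hg (m, I m) h1 h2 h3.
have [x hx] : exists x, forall m, (I m).1 <= x <= (I m).2.
  apply: nested_intervals => m; first by have [] := hstep m.
    by have [] := hstep m.
  by case: (hI m) => _ /ltW.
have [m hTx] := hcov x (hx 0).
by have [_ _ _ hnot] := hstep m; exact: hnot x (hx m.+1) hTx.
Qed.

End NestedIntervals.

Section SlopesOfConvexFunctions.
Variables (R : realType) (k : R).
Hypothesis k_ge0 : 0 <= k.
Implicit Types (f g : R -> R).

Definition strongly_convex01 f : Prop :=
  forall t1 t2 l, 0 <= t1 <= 1 -> 0 <= t2 <= 1 -> 0 <= l <= 1 ->
    f (l * t2 + (1 - l) * t1)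
      <= l * f t2 + (1 - l) * f t1 - k / 2 * (l * (1 - l)) * (t2 - t1) ^+ 2.

Lemma strongly_convex01_reflect f :
  strongly_convex01 f -> strongly_convex01 (fun t => f (1 - t)).
Proof.
move=> hf t1 t2 l ht1 ht2 hl.
have ht (t : R) : 0 <= t <= 1 -> 0 <= 1 - t <= 1 by case/andP => h1 h2; apply/andP; lra.
have := hf _ _ l (ht _ ht1) (ht _ ht2) hl.
have -> : l * (1 - t2) + (1 - l) * (1 - t1) = 1 - (l * t2 + (1 - l) * t1) by ring.
by have -> : (1 - t2 - (1 - t1)) ^+ 2 = (t2 - t1) ^+ 2 by ring.
Qed.

Lemma strongly_convex01_chord f t1 t2 s : strongly_convex01 f ->
  0 <= t1 -> 0 < s -> s <= t2 - t1 -> t2 <= 1 ->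
  (t2 - t1) * (f (t1 + s) - f t1)
    <= s * (f t2 - f t1) - k / 2 * s * (t2 - t1 - s) * (t2 - t1).
Proof.
move=> hf h1 hs hsD h2; have hD : 0 < t2 - t1 by lra.
have hl : 0 <= s / (t2 - t1) <= 1.
  by apply/andP; split; [apply: divr_ge0; lra | rewrite ler_pdivrMr // mul1r].
have ht1 : 0 <= t1 <= 1 by apply/andP; lra.
have ht2 : 0 <= t2 <= 1 by apply/andP; lra.
have := ler_wpM2l (ltW hD) (hf t1 t2 _ ht1 ht2 hl).
have -> : s / (t2 - t1) * t2 + (1 - s / (t2 - t1)) * t1 = t1 + s by field; lra.
have -> : (t2 - t1) * (s / (t2 - t1) * f t2 + (1 - s / (t2 - t1)) * f t1
    - k / 2 * (s / (t2 - t1) * (1 - s / (t2 - t1))) * (t2 - t1) ^+ 2)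
  = s * f t2 + (t2 - t1 - s) * f t1 - k / 2 * s * (t2 - t1 - s) * (t2 - t1).
  by field; lra.
lra.
Qed.

(* [op] stands for [Num.min] or [Num.max], the endpoints of a gH difference. *)
Lemma slope_le_chord (op : R -> R -> R) f g (d t1 t2 : R) :
  (forall a b a' b', a <= a' -> b <= b' -> op a b <= op a' b') ->
  (forall l a b : R, 0 <= l -> l * op a b = op (l * a) (l * b)) ->
  (forall a b c : R, op a b + c = op (a + c) (b + c)) ->
  strongly_convex01 f -> strongly_convex01 g -> 0 <= t1 -> t1 < t2 -> t2 <= 1 ->
  (forall e : R, 0 < e -> exists2 eta : R, 0 < eta & forall s : R, 0 < s -> s < eta ->
     s * d <= op (f (t1 + s) - f t1) (g (t1 + s) - g t1) + e * s) ->
  (t2 - t1) * d <= op (f t2 - f t1) (g t2 - g t1) - k / 2 * (t2 - t1) ^+ 2.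
Proof.
move=> hmono hscale htrans hf hg h1 h12 h2 hslope.
have hD : 0 < t2 - t1 by rewrite subr_gt0.
apply/ler_addgt0Pr => ep hep.
have hkD : 0 < k * (t2 - t1) + 1 by have := mulr_ge0 k_ge0 (ltW hD); lra.
have hepD : 0 < ep / 2 / (t2 - t1) by rewrite !divr_gt0.
have [eta heta hd] := hslope _ hepD.
pose s := Num.min (Num.min (t2 - t1) (eta / 2)) (ep / (k * (t2 - t1) + 1)).
have hs : 0 < s by rewrite !lt_min hD !divr_gt0.
have hsD : s <= t2 - t1 by rewrite !ge_min lexx.
have hseta : s < eta.
  by apply: (le_lt_trans (y := eta / 2)); [rewrite !ge_min lexx orbT | lra].
have hks : s * (k * (t2 - t1) * s) <= s * ep.
  have : s <= ep / (k * (t2 - t1) + 1) by rewrite ge_min lexx orbT.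
  by rewrite ler_pdivlMr // => hsk; rewrite ler_wpM2l ?ltW //; nra.
have hop : (t2 - t1) * op (f (t1 + s) - f t1) (g (t1 + s) - g t1)
    <= s * op (f t2 - f t1) (g t2 - g t1) - k / 2 * s * (t2 - t1 - s) * (t2 - t1).
  rewrite (hscale _ _ _ (ltW hD)) (hscale _ _ _ (ltW hs)) htrans.
  by apply: hmono; apply: strongly_convex01_chord.
have := ler_wpM2l (ltW hD) (hd s hs hseta).
have -> : (t2 - t1) * (op (f (t1 + s) - f t1) (g (t1 + s) - g t1) + ep / 2 / (t2 - t1) * s)
    = (t2 - t1) * op (f (t1 + s) - f t1) (g (t1 + s) - g t1) + ep / 2 * s.
  by field; rewrite gt_eqF.
move=> hsd; rewrite -(ler_pM2l hs); lra.
Qed.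

End SlopesOfConvexFunctions.

Section OneDimensionalGHDerivative.
Variable R : realType.
Implicit Types (Phi DPhi : R -> itv R).

Definition gH_derivative01 Phi DPhi : Prop :=
  forall t, 0 <= t <= 1 -> forall e : R, 0 < e -> exists2 eta : R, 0 < eta &
    forall s : R, `|s| < eta ->
      inorm (igH (igH (Phi (t + s)) (Phi t)) (iscale s (DPhi t))) <= e * `|s|.

Lemma gH_derivative01_slopes Phi DPhi t : gH_derivative01 Phi DPhi -> 0 <= t <= 1 ->
  forall e : R, 0 < e -> exists2 eta : R, 0 < eta & forall s : R, 0 < s -> s < eta ->
  [/\ s * ilo (DPhi t) <= ilo (igH (Phi (t + s)) (Phi t)) + e * s,
      s * ihi (DPhi t) <= ihi (igH (Phi (t + s)) (Phi t)) + e * s,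
      s * - ihi (DPhi t) <= ilo (igH (Phi (t - s)) (Phi t)) + e * s &
      s * - ilo (DPhi t) <= ihi (igH (Phi (t - s)) (Phi t)) + e * s].
Proof.
move=> hD ht e he; have [eta heta H] := hD t ht e he; exists eta => // s hs hse.
have hsN : `|- s| < eta by rewrite normrN gtr0_norm.
have hsP : `|s| < eta by rewrite gtr0_norm.
have := H _ hsN; have := H _ hsP; rewrite normrN gtr0_norm // => hP hN.
have := le_trans (ler_dist_ilo_igH _ _) hP; have := le_trans (ler_dist_ihi_igH _ _) hP.
have := le_trans (ler_dist_ilo_igH _ _) hN; have := le_trans (ler_dist_ihi_igH _ _) hN.
have hns : - s <= 0 by rewrite oppr_le0 ltW.
rewrite (ilo_iscale_ge0 _ (ltW hs)) (ihi_iscale_ge0 _ (ltW hs)).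
rewrite (ilo_iscale_le0 _ hns) (ihi_iscale_le0 _ hns).
by rewrite !ler_norml => /andP [h1 _] /andP [h2 _] /andP [h3 _] /andP [h4 _]; split; lra.
Qed.

Lemma gH_derivative01_chords (k : R) Phi DPhi t1 t2 : 0 <= k ->
  strongly_convex01 k (fun t => ilo (Phi t)) -> strongly_convex01 k (fun t => ihi (Phi t)) ->
  gH_derivative01 Phi DPhi -> 0 <= t1 -> t1 < t2 -> t2 <= 1 ->
  [/\ (t2 - t1) * ilo (DPhi t1) <= ilo (igH (Phi t2) (Phi t1)) - k / 2 * (t2 - t1) ^+ 2,
      (t2 - t1) * ihi (DPhi t1) <= ihi (igH (Phi t2) (Phi t1)) - k / 2 * (t2 - t1) ^+ 2,
      (t2 - t1) * - ihi (DPhi t2) <= ilo (igH (Phi t1) (Phi t2)) - k / 2 * (t2 - t1) ^+ 2 &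
      (t2 - t1) * - ilo (DPhi t2) <= ihi (igH (Phi t1) (Phi t2)) - k / 2 * (t2 - t1) ^+ 2].
Proof.
move=> hk hlo hhi hD h1 h12 h2.
have ht1 : 0 <= t1 <= 1 by apply/andP; lra.
have ht2 : 0 <= t2 <= 1 by apply/andP; lra.
have hminM (l a b : R) : 0 <= l -> l * Num.min a b = Num.min (l * a) (l * b).
  exact: minr_pMr.
have hmaxM (l a b : R) : 0 <= l -> l * Num.max a b = Num.max (l * a) (l * b).
  exact: maxr_pMr.
have chord_min := slope_le_chord hk le_min2 hminM (@addr_minl R).
have chord_max := slope_le_chord hk le_max2 hmaxM (@addr_maxl R).
(* Left slopes at [t2] are right slopes of the reflection [t |-> Phi (1 - t)]. *)
have hlo' := strongly_convex01_reflect hlo; have hhi' := strongly_convex01_reflect hhi.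
have h1' : 0 <= 1 - t2 by lra.
have h12' : 1 - t2 < 1 - t1 by lra.
have h2' : 1 - t1 <= 1 by lra.
have r1 u : 1 - (1 - u) = u :> R by ring.
have r2 u s : 1 - (1 - u + s) = u - s :> R by ring.
have r3 : 1 - t1 - (1 - t2) = t2 - t1 by ring.
split.
- apply: (chord_min _ _ _ _ _ hlo hhi h1 h12 h2) => e he.
  have [eta heta H] := gH_derivative01_slopes hD ht1 he.
  by exists eta => // s hs hse; case: (H s hs hse).
- apply: (chord_max _ _ _ _ _ hlo hhi h1 h12 h2) => e he.
  have [eta heta H] := gH_derivative01_slopes hD ht1 he.
  by exists eta => // s hs hse; case: (H s hs hse).
- have := chord_min _ _ (- ihi (DPhi t2)) _ _ hlo' hhi' h1' h12' h2'.
  rewrite !r1 r3; apply => e he; have [eta heta H] := gH_derivative01_slopes hD ht2 he.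
  by exists eta => // s hs hse; rewrite ?r1 !r2; case: (H s hs hse).
- have := chord_max _ _ (- ilo (DPhi t2)) _ _ hlo' hhi' h1' h12' h2'.
  rewrite !r1 r3; apply => e he; have [eta heta H] := gH_derivative01_slopes hD ht2 he.
  by exists eta => // s hs hse; rewrite ?r1 !r2; case: (H s hs hse).
Qed.

Lemma gH_derivative01_increasing (k : R) Phi DPhi : 0 <= k ->
  strongly_convex01 k (fun t => ilo (Phi t)) -> strongly_convex01 k (fun t => ihi (Phi t)) ->
  gH_derivative01 Phi DPhi ->
  increasing01 k (fun t => ilo (DPhi t)) /\ increasing01 k (fun t => ihi (DPhi t)).
Proof.
move=> hk hlo hhi hD; split=> t1 t2 h1 h12 h2; have [<-|hne] := eqVneq t1 t2;
  rewrite ?subrr ?mulr0 ?addr0 ?lexx //; have hlt : t1 < t2 by [rewrite lt_neqAle hne];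
  have hD12 : 0 < t2 - t1 by [rewrite subr_gt0];
  have [R1 R2 L1 L2] := gH_derivative01_chords hk hlo hhi hD h1 hlt h2;
  rewrite -(ler_pM2l hD12) mulrDr; move: R1 R2 L1 L2; rewrite !ilo_igHC expr2; lra.
Qed.

End OneDimensionalGHDerivative.

Section DegenerateTriangles.
Variable R : realType.

Lemma normB_degenerate (x y : R) :
  [\/ `|x - y| = `|x| + `|y|, `|x - y| = `|x| - `|y| | `|x - y| = `|y| - `|x|].
Proof.
case: (leP 0 x) => hx; case: (leP 0 y) => hy; rewrite ?(ger0_norm hx) ?(ltr0_norm hx).
- rewrite (ger0_norm hy); case: (leP y x) => hxy.
    by apply: Or32; rewrite ger0_norm; lra.
  by apply: Or33; rewrite ler0_norm; lra.
- by apply: Or31; rewrite (ltr0_norm hy) ger0_norm; lra.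
- by apply: Or31; rewrite (ger0_norm hy) ltr0_norm; lra.
- rewrite (ltr0_norm hy); case: (leP y x) => hxy.
    by apply: Or33; rewrite ger0_norm; lra.
  by apply: Or32; rewrite ltr0_norm; lra.
Qed.

Lemma far_from_degenerate_triangle (x y N1 N2 N3 g : R) :
  `| `|x| - N1| + `| `|y| - N2| + `| `|x - y| - N3| < g ->
  g <= N1 + N2 - N3 -> g <= N3 + N2 - N1 -> g <= N3 + N1 - N2 -> False.
Proof.
move=> herr g1 g2 g3.
have := lerNnormlW (lexx `| `|x| - N1|); have := lerNnormlW (lexx `| `|y| - N2|).
have := lerNnormlW (lexx `| `|x - y| - N3|).
have := ler_norm (`|x| - N1); have := ler_norm (`|y| - N2); have := ler_norm (`|x - y| - N3).
by case: (normB_degenerate x y) => e; lra.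
Qed.

Lemma triangle_gaps (a b s0 c0 Wj Wk Rr : R) :
  0 < a -> 0 < b -> 0 < s0 -> s0 <= 1 -> s0 * a <= b ->
  c0 <= Wj -> c0 <= Wk -> 0 <= c0 -> 0 <= Rr ->
  let N1 := b * Wj + a * Wk in
  let N2 := s0 * (a * Wj + b * Wk + Rr) in
  let N3 := (b - s0 * a) * Wj + (a + s0 * b) * Wk + s0 * Rr in
  let g := 2 * s0 * c0 * Num.min a b in
  [/\ g <= N1 + N2 - N3, g <= N3 + N2 - N1 & g <= N3 + N1 - N2].
Proof.
move=> ha hb hs0 hs1 hsab hj hk hc0 hR N1 N2 N3 g.
have hma : Num.min a b <= a by rewrite ge_min lexx.
have hmb : Num.min a b <= b by rewrite ge_min lexx orbT.
have hm0 : 0 <= Num.min a b by rewrite le_min !ltW.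
have ga : Num.min a b * c0 <= a * Wj by apply: ler_pM.
have gb : Num.min a b * c0 <= b * Wk by apply: ler_pM.
have ga' : Num.min a b * c0 <= a * Wk by apply: ler_pM.
have p1 : 0 <= s0 * (a * Wj - Num.min a b * c0).
  by apply: mulr_ge0; [exact: ltW | rewrite subr_ge0].
have p2 : 0 <= s0 * (b * Wk - Num.min a b * c0).
  by apply: mulr_ge0; [exact: ltW | rewrite subr_ge0].
have p3 : 0 <= s0 * Rr by apply: mulr_ge0; [exact: ltW | exact: hR].
have p4 : 0 <= (b - s0 * a) * Wj by apply: mulr_ge0; [rewrite subr_ge0 | lra].
have p5 : 0 <= (1 - s0) * (Num.min a b * c0).
  by apply: mulr_ge0; [rewrite subr_ge0 | exact: mulr_ge0].
by rewrite /N1 /N2 /N3 /g; split; lra.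
Qed.

End DegenerateTriangles.

Section WeightedNorm.
Variables (R : realType) (n : nat).
Implicit Types (W : 'I_n -> R) (d : 'rV[R]_n).

Lemma wnormZ W (s : R) d : wnorm W (s *: d) = `|s| * wnorm W d.
Proof.
by rewrite /wnorm mulr_sumr; apply: eq_bigr => i _; rewrite mxE normrM mulrA.
Qed.

Lemma ler_dist_wnorm W W' d :
  `|wnorm W d - wnorm W' d| <= enorm d * \sum_i `|W i - W' i|.
Proof.
rewrite /wnorm -sumrB mulr_sumr; apply: (le_trans (ler_norm_sum _ _ _)).
apply: ler_sum => i _; rewrite -mulrBr normrM normr_id.
by rewrite ler_wpM2r ?normr_ge0 ?ler_coord_enorm.
Qed.

Lemma wnorm_split2 W d (j k : 'I_n) : j != k ->
  wnorm W d = `|d 0 j| * W j + `|d 0 k| * W k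
              + \sum_(i | (i != j) && (i != k)) `|d 0 i| * W i.
Proof.
move=> hjk; rewrite /wnorm (bigD1 j) //= (bigD1 k) /=; last by rewrite eq_sym.
by rewrite addrA; congr (_ + _); apply: eq_bigl => i; rewrite andbC.
Qed.

Lemma wnorm_probe W (j k : 'I_n) (a b : R) : j != k -> 0 <= a -> 0 <= b ->
  wnorm W (b *: evec R j + a *: evec R k) = b * W j + a * W k.
Proof.
move=> hjk ha hb; rewrite (wnorm_split2 _ _ hjk) big1 => [|i /andP [hij hik]].
  have hkj : (k == j) = false by rewrite eq_sym; exact: negbTE.
  by rewrite !mxE !eqxx /= (negbTE hjk) hkj !mulr0n !mulr1 !mulr0 addr0 add0r addr0 !ger0_norm.
by rewrite !mxE /= (negbTE hij) (negbTE hik) !mulr0n !mulr0 addr0 normr0 mul0r.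
Qed.

Lemma wnorm_probe_sub W d (j k : 'I_n) (a b s : R) : j != k ->
  0 <= a -> 0 <= b -> 0 <= s -> s * a <= b -> d 0 j = a -> d 0 k = - b ->
  wnorm W (b *: evec R j + a *: evec R k - s *: d)
    = (b - s * a) * W j + (a + s * b) * W k
      + s * \sum_(i | (i != j) && (i != k)) `|d 0 i| * W i.
Proof.
move=> hjk ha hb hs hsab hdj hdk; rewrite (wnorm_split2 _ _ hjk) mulr_sumr.
have hkj : (k == j) = false by rewrite eq_sym; exact: negbTE.
rewrite !mxE !eqxx /= (negbTE hjk) hkj !mulr0n !mulr1 !mulr0 addr0 add0r hdj hdk.
rewrite ger0_norm ?subr_ge0 // mulrN opprK ger0_norm ?addr_ge0 ?mulr_ge0 //.
congr (_ + _); apply: eq_bigr => i /andP [hij hik].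
rewrite !mxE /= (negbTE hij) (negbTE hik) !mulr0n !mulr0 addr0 sub0r normrN normrM.
by rewrite ger0_norm // mulrA.
Qed.

End WeightedNorm.

(* In the application [h] is the width of [F] and [W t i] the width of the
   i-th gH partial derivative at [y + t *: v]. *)
Section WeightSigns.
Variables (R : realType) (n : nat) (h : 'rV[R]_n -> R) (W : R -> 'I_n -> R).
Variables (y v : 'rV[R]_n) (K : R).

Let z (t : R) := y + t *: v.

Definition expands_at (t e eta : R) : Prop := forall d, enorm d < eta ->
  `| `|h (z t + d) - h (z t)| - wnorm (W t) d| <= e * enorm d.

Hypothesis W_ge0 : forall t i, 0 <= W t i.
Hypothesis W_lipschitz : forall t t', 0 <= t <= 1 -> 0 <= t' <= 1 ->
  \sum_i `|W t i - W t' i| <= K * `|t - t'|.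
Hypothesis h_expands : forall t, 0 <= t <= 1 -> forall e : R, 0 < e ->
  exists2 eta : R, 0 < eta & expands_at t e eta.

Lemma uniform_expansion_pair (al be e : R) (phi : R -> R) :
  0 <= al -> al < be -> be <= 1 -> 0 < e -> (forall eta, 0 < eta -> 0 < phi eta) ->
  exists t t' eta, [/\ al <= t, t < t', t' <= be, 0 < eta & t' - t < phi eta]
                   /\ expands_at t e eta /\ expands_at t' e eta.
Proof.
move=> hal hab hbe he hphi.
pose T m t := al <= t <= be /\ expands_at t e m.+1%:R^-1.
have hcover t : al <= t <= be -> exists m, T m t.
  move=> ht; have ht01 : 0 <= t <= 1 by case/andP: ht => h1 h2; apply/andP; lra.
  have [eta heta hexp] := h_expands ht01 he.
  have hm : eta^-1 < (Num.Def.archi_bound eta^-1)%:R.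
    by apply: archi_boundP; rewrite invr_ge0 ltW.
  exists (Num.Def.archi_bound eta^-1); split => // d hd; apply: hexp.
  apply: (lt_trans hd); rewrite -[X in _ < X]invrK ltf_pV2 ?posrE ?invr_gt0 ?ltr0Sn //.
  by apply: (lt_le_trans hm); rewrite ler_nat.
have hr m : 0 < phi m.+1%:R^-1 by rewrite hphi // invr_gt0 ltr0Sn.
have [m [t [t' [[[_ ht] [_ ht'] h1 h2 h3] hclose]]]] := countable_cover_close_pair hab hr hcover.
by exists t, t', m.+1%:R^-1; split; split => //; rewrite invr_gt0 ltr0Sn.
Qed.

Lemma lipschitz_const_ge0 : 0 <= K.
Proof.
have h01 : 0 <= (0 : R) <= 1 by rewrite lexx ler01.
have h11 : 0 <= (1 : R) <= 1 by rewrite lexx ler01.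
have := W_lipschitz h01 h11; rewrite sub0r normrN normr1 mulr1.
by apply: le_trans; rewrite sumr_ge0.
Qed.

Lemma weight_near_ge t0 t i (c : R) : 0 <= t0 <= 1 -> 0 <= t <= 1 ->
  2 * c <= W t0 i -> `|t - t0| <= c / (K + 1) -> 0 <= c -> c <= W t i.
Proof.
move=> ht0 ht hW hdist hc; have hK := lipschitz_const_ge0.
have hWi : `|W t i - W t0 i| <= K * (c / (K + 1)).
  apply: le_trans (ler_wpM2l hK hdist); apply: le_trans (W_lipschitz ht ht0).
  by apply: (ler_term_sum (f := fun i => `|W t i - W t0 i|)) => l.
have : K * (c / (K + 1)) <= c by rewrite mulrA ler_pdivrMr; nra.
by move: hWi; rewrite ler_norml => /andP [h1 _]; lra.
Qed.

Lemma expansion_triangle t t' (e eta : R) d1 :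
  0 <= t <= 1 -> 0 <= t' <= 1 -> expands_at t e eta -> expands_at t' e eta ->
  let d2 := (t' - t) *: v in let d3 := d1 - d2 in
  enorm d1 < eta -> enorm d2 < eta -> enorm d3 < eta ->
  exists x y : R,
    `| `|x| - wnorm (W t) d1| + `| `|y| - wnorm (W t) d2| + `| `|x - y| - wnorm (W t) d3|
      <= e * (enorm d1 + enorm d2 + enorm d3) + enorm d3 * (K * `|t' - t|).
Proof.
move=> ht ht' hexp hexp' d2 d3 hd1 hd2 hd3.
have hz2 : z t + d2 = z t' by apply/matrixP => a b; rewrite !mxE; ring.
have hz3 : z t' + d3 = z t + d1 by rewrite /d3 -hz2 addrACA subrr addr0.
exists (h (z t + d1) - h (z t)), (h (z t') - h (z t)).
have e1 := hexp d1 hd1; have e2 := hexp d2 hd2; rewrite hz2 in e2.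
have := hexp' d3 hd3; rewrite hz3.
have -> : h (z t + d1) - h (z t) - (h (z t') - h (z t)) = h (z t + d1) - h (z t') by ring.
move=> e3; have hW := ler_dist_wnorm (W t') (W t) d3.
have hWs : enorm d3 * \sum_i `|W t' i - W t i| <= enorm d3 * (K * `|t' - t|).
  by rewrite ler_wpM2l ?enorm_ge0 ?W_lipschitz.
have := ler_distD (wnorm (W t') d3) `|h (z t + d1) - h (z t')| (wnorm (W t) d3).
lra.
Qed.

Section Probe.
Variables (j k : 'I_n) (a b s0 c0 : R).
Hypotheses (hjk : j != k) (hva : v 0 j = a) (hvb : v 0 k = - b) (ha : 0 < a) (hb : 0 < b).
Hypotheses (hs0 : 0 < s0) (hs01 : s0 <= 1) (hs0ab : s0 * a <= b) (hc0 : 0 < c0).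

Let p := b *: evec R j + a *: evec R k.
Let q := p - s0 *: v.
Let S := enorm p + s0 * enorm v + enorm q + 1.
Let g := 2 * s0 * c0 * Num.min a b.

(* With [v 0 j = a > 0 > v 0 k = - b], the displacements [rho *: p],
   [rho * s0 *: v] and their difference [rho *: q] change [h] by x, y and
   x - y, whose absolute values would have to approximate the non-degenerate
   triangle of [triangle_gaps]. *)
Lemma probe_pair_contra t rho e eta :
  0 <= t -> 0 < rho -> t + rho * s0 <= 1 -> c0 <= W t j -> c0 <= W t k ->
  0 <= e -> expands_at t e eta -> expands_at (t + rho * s0) e eta ->
  rho * S < eta -> e * S <= g / 4 -> enorm q * K * s0 * rho <= g / 4 -> False.
Proof.
move=> ht0 hrho ht1 hWj hWk he hexp hexp' hrS heS hqK.
have hrs : 0 < rho * s0 := mulr_gt0 hrho hs0.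
have ht : 0 <= t <= 1 by apply/andP; split => //; lra.
have ht' : 0 <= t + rho * s0 <= 1 by apply/andP; split => //; lra.
have hKp := enorm_ge0 p; have hKq := enorm_ge0 q.
have hKv : 0 <= s0 * enorm v by rewrite mulr_ge0 ?enorm_ge0 ?ltW.
have hbound (x : R) : 0 <= x -> x <= S -> rho * x < eta.
  by move=> hx hxS; apply: (le_lt_trans _ hrS); rewrite ler_pM2l.
pose d1 := rho *: p.
have et : t + rho * s0 - t = rho * s0 by rewrite addrC addKr.
have n1 : enorm d1 = rho * enorm p by rewrite enormZ gtr0_norm.
have n2 : enorm (rho *: (s0 *: v)) = rho * (s0 * enorm v) by rewrite !enormZ !gtr0_norm.
have n3 : enorm (rho *: q) = rho * enorm q by rewrite enormZ gtr0_norm.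
have hd1 : enorm d1 < eta by rewrite n1 hbound //; rewrite /S; lra.
have hd2 : enorm ((t + rho * s0 - t) *: v) < eta.
  by rewrite et -scalerA n2 hbound //; rewrite /S; lra.
have hd3 : enorm (d1 - (t + rho * s0 - t) *: v) < eta.
  by rewrite et -scalerA -scalerBr n3 hbound //; rewrite /S; lra.
have [x1 [x2]] := expansion_triangle ht ht' hexp hexp' hd1 hd2 hd3.
rewrite et -scalerA -scalerBr n1 n2 n3 (gtr0_norm hrs) /d1 !wnormZ (gtr0_norm hrho).
have ha0 := ltW ha; have hb0 := ltW hb; have hs00 := ltW hs0.
rewrite (gtr0_norm hs0) /q /p wnorm_probe // wnorm_probe_sub //.
rewrite [wnorm _ v](wnorm_split2 _ _ hjk) hva hvb normrN (gtr0_norm ha) (gtr0_norm hb) => hxy.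
pose Rr := \sum_(i | (i != j) && (i != k)) `|v 0 i| * W t i.
have hRr : 0 <= Rr by apply: sumr_ge0 => i _; rewrite mulr_ge0 ?normr_ge0.
have [g1 g2 g3] := triangle_gaps ha hb hs0 hs01 hs0ab hWj hWk (ltW hc0) hRr.
have hrg : 0 < rho * g by rewrite mulr_gt0 // /g !mulr_gt0 // lt_min ha hb.
have := mulr_ge0 he (ltW hrho); have := ler_wpM2l (ltW hrho) heS.
have := ler_wpM2l (ltW hrho) hqK; rewrite /S => hE1 hE2 hE3.
apply: (far_from_degenerate_triangle (g := rho * g) (le_lt_trans hxy _)); rewrite -/Rr.
- by move: hE1 hE2 hE3; rewrite -/p -/q; lra.
- by have := ler_wpM2l (ltW hrho) g1; rewrite -/g; lra.
- by have := ler_wpM2l (ltW hrho) g2; rewrite -/g; lra.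
- by have := ler_wpM2l (ltW hrho) g3; rewrite -/g; lra.
Qed.

Lemma probe_contra al be : 0 <= al -> al < be -> be <= 1 ->
  (forall t, al <= t <= be -> c0 <= W t j /\ c0 <= W t k) -> False.
Proof.
move=> hal hab hbe hW; have hK := lipschitz_const_ge0.
have hS : 0 < S.
  have := enorm_ge0 p; have := enorm_ge0 q; have := mulr_ge0 (ltW hs0) (enorm_ge0 v).
  by rewrite /S; lra.
have hmin : 0 < Num.min a b by rewrite lt_min ha hb.
have hg : 0 < g by rewrite /g; do 3 apply: mulr_gt0 => //.
pose e := g / 4 / S; have he : 0 < e by rewrite !divr_gt0.
have hqKs : 0 <= enorm q * K * s0 := mulr_ge0 (mulr_ge0 (enorm_ge0 q) hK) (ltW hs0).
pose r0 := g / 4 / (enorm q * K * s0 + 1).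
have hr0 : 0 < r0 by apply: divr_gt0; [exact: divr_gt0 | lra].
pose phi eta := s0 * Num.min r0 (eta / S).
have hphi eta : 0 < eta -> 0 < phi eta.
  move=> heta; apply: mulr_gt0 => //; rewrite lt_min; apply/andP; split => //.
  exact: divr_gt0.
have [t [t' [eta [[h1 h12 h2 heta hclose] [hexp hexp']]]]] :=
  uniform_expansion_pair hal hab hbe he hphi.
pose rho := (t' - t) / s0.
have hrho : 0 < rho by rewrite divr_gt0 // subr_gt0.
have et' : t' = t + rho * s0 by rewrite /rho divfK ?gt_eqF // addrC subrK.
have [hr0' hrS] : rho <= r0 /\ rho * S < eta.
  have : rho < Num.min r0 (eta / S) by rewrite ltr_pdivrMr // mulrC.
  rewrite lt_min => /andP [/ltW hr hre]; split => //.
  by move: hre; rewrite ltr_pdivlMr.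
have [hWj hWk] : c0 <= W t j /\ c0 <= W t k by apply: hW; rewrite h1 /=; lra.
apply: (probe_pair_contra (rho := rho) (eta := eta) _ hrho _ hWj hWk (ltW he));
  rewrite -?et' //.
- lra.
- lra.
- by rewrite /e divfK ?gt_eqF.
- apply: le_trans (ler_wpM2l hqKs hr0') _.
  by rewrite /r0 mulrA ler_pdivrMr; [nra | lra].
Qed.

End Probe.

Lemma weights_ge_near t0 i1 i2 : 0 <= t0 <= 1 -> 0 < W t0 i1 -> 0 < W t0 i2 ->
  exists c0 al be, [/\ 0 < c0, 0 <= al, al < be, be <= 1 &
    forall t, al <= t <= be -> c0 <= W t i1 /\ c0 <= W t i2].
Proof.
move=> ht0 hW1 hW2; have hK := lipschitz_const_ge0; have /andP [h0 h1] := ht0.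
pose c0 := Num.min (W t0 i1) (W t0 i2) / 2.
have hc0 : 0 < c0 by rewrite divr_gt0 // lt_min hW1 hW2.
have c01 : 2 * c0 <= W t0 i1 by rewrite mulrC divfK ?ge_min ?lexx // pnatr_eq0.
have c02 : 2 * c0 <= W t0 i2 by rewrite mulrC divfK ?ge_min ?lexx ?orbT // pnatr_eq0.
pose dl := c0 / (K + 1); have hdl : 0 < dl by rewrite divr_gt0 //; lra.
exists c0, (Num.max 0 (t0 - dl)), (Num.min 1 (t0 + dl)).
split=> //; first by rewrite le_max lexx.
- by rewrite gt_max !lt_min; apply/andP; split; apply/andP; split; lra.
- by rewrite ge_min lexx.
move=> t /andP []; rewrite ge_max le_min => /andP [h2 h3] /andP [h4 h5].
have ht : 0 <= t <= 1 by apply/andP; lra.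
have hdist : `|t - t0| <= dl by rewrite ler_norml; apply/andP; lra.
by split; [exact: weight_near_ge ht0 ht c01 hdist (ltW hc0)
          | exact: weight_near_ge ht0 ht c02 hdist (ltW hc0)].
Qed.

Lemma no_opposite_weights t0 j k : 0 <= t0 <= 1 ->
  0 < v 0 j * W t0 j -> v 0 k * W t0 k < 0 -> False.
Proof.
move=> ht0 hj hk.
have ha : 0 < v 0 j.
  by case: (leP (v 0 j) 0) => // hle; have := mulr_le0_ge0 hle (W_ge0 t0 j); lra.
have hvk : v 0 k < 0.
  by case: (leP 0 (v 0 k)) => // hle; have := mulr_ge0 hle (W_ge0 t0 k); lra.
have hWj : 0 < W t0 j by move: hj; rewrite pmulr_rgt0.
have hWk : 0 < W t0 k by move: hk; rewrite nmulr_rlt0.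
have hjk : j != k by apply: contraTneq hj => ->; rewrite ltNge ltW.
have [c0 [al [be [hc0 hal hab hbe hW]]]] := weights_ge_near ht0 hWj hWk.
pose b := - v 0 k; have hb : 0 < b by rewrite oppr_gt0.
pose s0 := Num.min 1 (b / v 0 j).
have hs0 : 0 < s0 by rewrite lt_min ltr01 divr_gt0.
have hs01 : s0 <= 1 by rewrite ge_min lexx.
have hs0ab : s0 * v 0 j <= b by rewrite -ler_pdivlMr // ge_min lexx orbT.
apply: (probe_contra (a := v 0 j) (b := b) hjk erefl _ ha hb hs0 hs01 hs0ab hc0 hal hab hbe hW).
by rewrite opprK.
Qed.

Lemma weights_same_sign t : 0 <= t <= 1 ->
  (forall i, 0 <= v 0 i * W t i) \/ (forall i, v 0 i * W t i <= 0).
Proof.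
move=> ht; case: (pselect (forall i, 0 <= v 0 i * W t i)) => [|/existsNP [j]]; first by left.
move/negP; rewrite -ltNge => hj; right => i; rewrite leNgt; apply/negP => hi.
exact: no_opposite_weights ht hi hj.
Qed.

End WeightSigns.

Section Segment.
Variables (R : realType) (n : nat) (w w' sg M : R).
Variables (X : 'rV[R]_n -> Prop) (F : 'rV[R]_n -> itv R) (x y : 'rV[R]_n).
Variable c : R -> 'I_n -> itv R.
Hypotheses (hw : 0 <= w) (hw' : 0 <= w') (hww : w + w' = 1) (hsg : 0 < sg).
Hypotheses (hX : convex_set X) (hx : X x) (hy : X y).
Hypothesis hlo : strongly_convex_fun_on X (fun z => ilo (F z)) sg.
Hypothesis hhi : strongly_convex_fun_on X (fun z => ihi (F z)) sg.
Hypothesis hLip : forall x y gx gy, X x -> X y -> is_grad F x gx -> is_grad F y gy ->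
  inormn (igHn gx gy) <= M * enorm (x - y).
Hypothesis hc : forall t, 0 <= t <= 1 -> gH_derivative_at F (y + t *: (x - y)) (c t).

Let v := x - y.
Let z t := y + t *: v.
Let P t := ilo (linIVF (c t) v).
Let Q t := ihi (linIVF (c t) v).
Let Phi t := dotv (Wmap w w' (c t)) v.

Lemma segment_in t : 0 <= t <= 1 -> X (z t).
Proof.
move=> ht; have -> : z t = t *: x + (1 - t) *: y.
  by apply/matrixP => i j; rewrite !mxE; ring.
exact: hX.
Qed.

Lemma segment_grad_dist t t' : 0 <= t <= 1 -> 0 <= t' <= 1 ->
  inormn (igHn (c t) (c t')) <= M * enorm v * `|t - t'|.
Proof.
move=> ht ht'; have := hLip (segment_in ht) (segment_in ht')
  (gH_derivative_grad (hc ht)) (gH_derivative_grad (hc ht')).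
have -> : z t - z t' = (t - t') *: v by apply/matrixP => i j; rewrite !mxE; ring.
by rewrite enormZ [`|_| * _]mulrC mulrA.
Qed.

Lemma segment_gH_derivative01 :
  gH_derivative01 (fun t => F (z t)) (fun t => linIVF (c t) v).
Proof.
move=> t ht e he; have hv1 : 0 < enorm v + 1 by have := enorm_ge0 v; lra.
have [eta heta hd] := hc ht (divr_gt0 he hv1).
exists (eta / (enorm v + 1)); first exact: divr_gt0.
move=> s hs; have -> : z (t + s) = z t + s *: v.
  by apply/matrixP => i j; rewrite !mxE; ring.
rewrite -linIVFZ; apply: le_trans (hd _ _) _.
  rewrite enormZ; apply: le_lt_trans (_ : `|s| * enorm v <= `|s| * (enorm v + 1)) _.
    by rewrite ler_wpM2l //; lra.
  by rewrite -ltr_pdivlMr.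
have hev : e / (enorm v + 1) * enorm v <= e.
  by rewrite mulrAC ler_pdivrMr //; have := enorm_ge0 v; nra.
by rewrite enormZ mulrCA [e * _]mulrC; apply: ler_wpM2l.
Qed.
Lemma segment_grad0 : is_grad F y (c 0).
Proof.
have := gH_derivative_grad (hc (t := 0) _); rewrite scale0r addr0.
by apply; rewrite lexx ler01.
Qed.

Lemma segment_grad1 : is_grad F x (c 1).
Proof.
have := gH_derivative_grad (hc (t := 1) _); rewrite scale1r addrC subrK.
by apply; rewrite lexx ler01.
Qed.

Lemma segment_strongly_convex :
  strongly_convex01 (sg * enorm v ^+ 2) (fun t => ilo (F (z t))) /\
  strongly_convex01 (sg * enorm v ^+ 2) (fun t => ihi (F (z t))).
Proof.
have hz t1 t2 l : l *: z t2 + (1 - l) *: z t1 = z (l * t2 + (1 - l) * t1).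
  by apply/matrixP => i j; rewrite !mxE; ring.
have hd t1 t2 : enorm (z t2 - z t1) ^+ 2 = (t2 - t1) ^+ 2 * enorm v ^+ 2.
  have -> : z t2 - z t1 = (t2 - t1) *: v by apply/matrixP => i j; rewrite !mxE; ring.
  by rewrite enormZ exprMn real_normK ?num_real.
have hk (l t1 t2 : R) : sg * enorm v ^+ 2 / 2 * (l * (1 - l)) * (t2 - t1) ^+ 2 =
    sg / 2 * (l * (1 - l)) * ((t2 - t1) ^+ 2 * enorm v ^+ 2) by ring.
split=> t1 t2 l ht1 ht2 hl; rewrite hk -hz -hd.
- exact: hlo (segment_in ht2) (segment_in ht1) hl.
- exact: hhi (segment_in ht2) (segment_in ht1) hl.
Qed.

Lemma segment_width_expands t e : 0 <= t <= 1 -> 0 < e ->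
  exists2 eta : R, 0 < eta &
    expands_at (fun p => iwidth (F p)) (fun t i => iwidth (c t i)) y v t e eta.
Proof. by move=> ht he; exact: gH_derivative_width (hc ht) e he. Qed.

Lemma segment_widths_lipschitz t t' : 0 <= t <= 1 -> 0 <= t' <= 1 ->
  \sum_i `|iwidth (c t i) - iwidth (c t' i)| <= 2 * M * enorm v * `|t - t'|.
Proof.
move=> ht ht'; apply: le_trans (_ : 2 * inormn (igHn (c t) (c t')) <= _).
  by rewrite /inormn mulr_sumr; apply: ler_sum => i _; exact: ler_dist_iwidth.
by rewrite -!mulrA ler_pM2l // mulrA segment_grad_dist.
Qed.

Lemma segment_Phi_cases t : 0 <= t <= 1 ->
  Phi t = w * P t + w' * Q t \/ Phi t = w' * P t + w * Q t.
Proof.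
move=> ht; have [hpos|hneg] := weights_same_sign (fun t i => iwidth_ge0 (c t i))
  segment_widths_lipschitz (fun t ht e he => segment_width_expands ht he) ht.
  by left; exact: dotv_Wmap_nonneg_widths.
by right; exact: dotv_Wmap_nonpos_widths.
Qed.

Lemma segment_lipschitz :
  [/\ lipschitz01 (M * enorm v ^+ 2) P, lipschitz01 (M * enorm v ^+ 2) Q
     & lipschitz01 (M * enorm v ^+ 2) Phi].
Proof.
have hK t t' : 0 <= t <= 1 -> 0 <= t' <= 1 ->
    enorm v * inormn (igHn (c t) (c t')) <= M * enorm v ^+ 2 * `|t - t'|.
  move=> ht ht'; apply: le_trans (ler_wpM2l (enorm_ge0 v) (segment_grad_dist ht ht')) _.
  by rewrite le_eqVlt; apply/orP; left; apply/eqP; ring.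
split=> t t' ht ht'; apply: le_trans (hK t t' ht ht').
- exact: ler_dist_ilo_linIVF.
- exact: ler_dist_ihi_linIVF.
- exact: ler_dist_dotv_Wmap.
Qed.

Lemma segment_increasing : Phi 0 + sg * enorm v ^+ 2 <= Phi 1.
Proof.
have hk : 0 <= sg * enorm v ^+ 2 by rewrite mulr_ge0 ?sqr_ge0 ?ltW.
have [hcvx_lo hcvx_hi] := segment_strongly_convex.
have [hP hQ] := gH_derivative01_increasing hk hcvx_lo hcvx_hi segment_gH_derivative01.
have [lP lQ lPhi] := segment_lipschitz.
have hw'w : w' + w = 1 by rewrite addrC.
apply: (increasing01_switch segment_Phi_cases (increasing01_comb hw hw' hww hP hQ)
  (increasing01_comb hw' hw hw'w hP hQ) lPhi).
- exact: lipschitz01_comb.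
- exact: lipschitz01_comb.
Qed.

End Segment.

Lemma segment_gH_derivatives (R : realType) (n : nat) (X : 'rV[R]_n -> Prop)
    (F : 'rV[R]_n -> itv R) x y :
  convex_set X -> (forall z, X z -> gH_differentiable_at F z) -> X x -> X y ->
  exists c : R -> 'I_n -> itv R,
    forall t, 0 <= t <= 1 -> gH_derivative_at F (y + t *: (x - y)) (c t).
Proof.
move=> hX hdiff hx hy.
suff hex t : exists c0, 0 <= t <= 1 -> gH_derivative_at F (y + t *: (x - y)) c0.
  by have [c hc] := choice hex; exists c.
case: (pselect (0 <= t <= 1)) => ht; last by exists (fun _ => izero R).
have [c0 hc0] := gH_differentiable_derivative (hdiff _ (segment_in hX hx hy ht)).
by exists c0.
Qed.

Lemma grad_Wmap_unique (R : realType) (n : nat) (w w' M : R) (X : 'rV[R]_n -> Prop)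
    (F : 'rV[R]_n -> itv R) z g1 g2 :
  0 <= w -> 0 <= w' -> w + w' = 1 ->
  (forall x y gx gy, X x -> X y -> is_grad F x gx -> is_grad F y gy ->
     inormn (igHn gx gy) <= M * enorm (x - y)) ->
  X z -> is_grad F z g1 -> is_grad F z g2 -> Wmap w w' g1 = Wmap w w' g2.
Proof.
move=> hw hw' hww hLip hz hg1 hg2; apply/eqP; rewrite -subr_eq0; apply/eqP/enorm_eq0.
apply/eqP; rewrite eq_le enorm_ge0 andbT.
apply: le_trans (enorm_Wmap_sub _ _ hw hw' hww) _.
by apply: le_trans (hLip _ _ _ _ hz hz hg1 hg2) _; rewrite subrr enorm0 mulr0.
Qed.

Theorem lemma5p6 (R : realType) (n : nat) (w w' : R)
  (X : 'rV[R]_n -> Prop) (F : 'rV[R]_n -> itv R) :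
  0 <= w <= 1 -> 0 <= w' <= 1 -> w + w' = 1 ->
  (exists x0, X x0) -> convex_set X ->
  strongly_convex_on X F ->
  (forall x, X x -> gH_differentiable_at F x) ->
  gH_Lipschitz_grad_on X F ->
  exists sigma L : R, [/\ 0 < sigma, 0 < L &
    forall x y gx gy, X x -> X y -> is_grad F x gx -> is_grad F y gy ->
      dotv (Wmap w w' gx - Wmap w w' gy) (x - y)
        >= sigma / L ^+ 2 * enorm (Wmap w w' gx - Wmap w w' gy) ^+ 2].
Proof.
move=> /andP [hw _] /andP [hw' _] hww _ hX hSC hdiff [M hM hLip].
have [sg hsg [hlo hhi]] := strongly_convex_endpoints hX hSC.
exists sg, M; split => // x y gx gy hx hy hgx hgy.
have [c hc] := segment_gH_derivatives hX hdiff hx hy.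
have := segment_increasing hw hw' hww hsg hX hx hy hlo hhi hLip hc.
rewrite (grad_Wmap_unique hw hw' hww hLip hx (segment_grad1 hc) hgx).
rewrite (grad_Wmap_unique hw hw' hww hLip hy (segment_grad0 hc) hgy) => hmono.
apply: (cocoercive_of_strongly_monotone hsg hM (enorm_ge0 _)).
  exact: le_trans (enorm_Wmap_sub gx gy hw hw' hww) (hLip _ _ _ _ hx hy hgx hgy).
by rewrite dotvBl; lra.
Qed.
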